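(* For all integers $m\ge2$, $n\ge2$ there exists a proportional mechanism $(A,p)$ for the job scheduling problem over the set $\mathcal{N}$ of normalized instances with $m$ machines and $n$ jobs such that $\max_{i\in[m]}c_i(A(c)_i)=\mathrm{OPT}(c)$ for every $c\in\mathcal{N}$.
   Context: Notation: $[k]=\{1,\dots,k\}$. An instance is a matrix $c\in\mathbb{R}_{\ge0}^{m\times n}$; for $S\subseteq[n]$, $c_i(S)=\sum_{j\in S}c_{i,j}$. The set of normalized instances is $\mathcal{N}=\{c\in\mathbb{R}_{\ge0}^{m\times n}: \exists C \text{ with } c_i([n])=C\text{ for all } i\in[m]\}$. An allocation is a tuple $(X_1,\dots,X_m)$ of pairwise disjoint subsets of $[n]$ whose union is $[n]$. A mechanism $(A,p)$ over a set of instances $\mathcal{I}$ assigns to each $c\in\mathcal{I}$ an allocation $A(c)$ and payments $p(c)\in\mathbb{R}^m$ (written $A_i,p_i$). It is proportional if for every $c\in\mathcal{I}$ and $i\in[m]$: $c_i(A_i)-p_i\le\frac1m\sum_{j\in[m]}(c_i(A_j)-p_j)$. $\mathrm{OPT}(c)=\min_X\max_{i\in[m]}c_i(X_i)$ over all allocations $X$. *)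

From HB Require Import structures.
From mathcomp Require Import all_boot all_order all_algebra.
From mathcomp Require Import reals.
Set Implicit Arguments. Unset Strict Implicit. Unset Printing Implicit Defensive.
Import Order.TTheory GRing.Theory Num.Theory.
Local Open Scope ring_scope.

(* Instances: c : 'M[R]_(m,n), entry c i j = cost of job j on machine i. *)
Definition cost (R : realType) (m n : nat) (c : 'M[R]_(m, n)) (i : 'I_m)
  (S : {set 'I_n}) : R := \sum_(j in S) c i j.

Definition normalized (R : realType) (m n : nat) (c : 'M[R]_(m, n)) : Prop :=
  (forall i j, 0 <= c i j) /\
  exists C : R, forall i, cost c i [set: 'I_n] = C.

Definition allocation (m n : nat) (X : {ffun 'I_m -> {set 'I_n}}) : bool :=
  [forall i, forall k, (i != k) ==> [disjoint X i & X k]] &&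
  (\bigcup_(i < m) X i == [set: 'I_n]).

Definition makespan (R : realType) (m n : nat) (c : 'M[R]_(m, n))
  (X : {ffun 'I_m -> {set 'I_n}}) : R :=
  \big[Num.max/0]_(i < m) cost c i (X i).

(* The set of allocations
   is finite and (for m >= 1) nonempty; we express the minimum as the value
   attained by some allocation that is <= all others. *)
Definition is_OPT (R : realType) (m n : nat) (c : 'M[R]_(m, n)) (v : R) : Prop :=
  (exists X, allocation X /\ makespan c X = v) /\
  (forall X, allocation X -> v <= makespan c X).

Definition proportional (R : realType) (m n : nat)
  (I : 'M[R]_(m, n) -> Prop)
  (A : 'M[R]_(m, n) -> {ffun 'I_m -> {set 'I_n}})
  (p : 'M[R]_(m, n) -> 'I_m -> R) : Prop :=
  forall c, I c -> forall i : 'I_m,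
    cost c i (A c i) - p c i <=
    m%:R^-1 * \sum_(k < m) (cost c i (A c k) - p c k).

From HB Require Import structures.
From mathcomp Require Import all_boot all_order all_algebra.
From mathcomp Require Import reals.
Set Implicit Arguments. Unset Strict Implicit. Unset Printing Implicit Defensive.
Import Order.TTheory GRing.Theory Num.Theory.
Local Open Scope ring_scope.

(* Among the allocations of optimal makespan, take one of least social cost
   sum_k c_k(X_k).  Some machine i values every bundle at least as much as its
   holder does: otherwise each machine i envies some k = f i, and on a cycle
   of f handing each bundle X_(f i) to i lowers the social cost without
   raising the makespan.  Hence sum_k c_k(X_k) <= sum_k c_i(X_k) = C, and the
   payments p_i = c_i(X_i) make every proportionality inequality read
   0 <= (C - sum_k c_k(X_k)) / m. *)

Section InvariantSet.
Variables (T : finType) (f : T -> T).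

Lemma exists_periodic_point (x0 : T) :
  exists x (k : nat), (0 < k)%N /\ iter k f x = x.
Proof.
pose g (t : 'I_#|T|.+1) := iter t f x0.
have /injectivePn [a [b neq_ab eq_gab]] : ~~ injectiveb g.
  by apply/injectiveP => /leq_card; rewrite card_ord ltnn.
wlog lt_ab : a b neq_ab eq_gab / (a < b)%N.
  move=> W; case: (ltngtP a b) => [|lt_ba|/val_inj eq_ab]; first exact: W.
  - by apply: (W b a); rewrite // eq_sym.
  - by rewrite eq_ab eqxx in neq_ab.
exists (iter a f x0), (b - a)%N; split; first by rewrite subn_gt0.
by rewrite -iterD subnK ?(ltnW lt_ab) //; apply: esym.
Qed.

Lemma exists_imset_invariant (x0 : T) : exists2 S : {set T}, S != set0 & f @: S = S.
Proof.
have [x [k [k_gt0 periodic_x]]] := exists_periodic_point x0.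
pose S := [set iter t f x | t : 'I_k].
have iter_in_S t : iter t f x \in S.
  have iter_mul q : iter (q * k) f x = x.
    by elim: q => // q IHq; rewrite mulSn iterD IHq periodic_x.
  rewrite (divn_eq t k) addnC iterD iter_mul.
  by apply/imsetP; exists (Ordinal (ltn_pmod t k_gt0)).
exists S; first by apply/set0Pn; exists x; apply: (iter_in_S 0%N).
apply/eqP; rewrite eqEsubset; apply/andP; split; apply/subsetP => y.
  by move=> /imsetP [_ /imsetP [t _ ->] ->]; rewrite -iterS iter_in_S.
case/imsetP=> t _ ->; apply/imsetP; exists (iter (t + k).-1 f x) => //.
by rewrite -iterS prednK ?addn_gt0 ?k_gt0 ?orbT // iterD periodic_x.
Qed.

End InvariantSet.

Section Allocations.
Variables (m n : nat).
Implicit Type X : {ffun 'I_m -> {set 'I_n}}.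

Lemma allocation_single (i0 : 'I_m) :
  allocation [ffun i => if i == i0 then [set: 'I_n] else set0].
Proof.
apply/andP; split.
  apply/forallP => a; apply/forallP => b; apply/implyP => neq_ab; rewrite !ffunE.
  case: (eqVneq a i0) => [eq_a|_]; last by rewrite disjoints_subset sub0set.
  by rewrite -eq_a eq_sym (negbTE neq_ab) disjoint_sym disjoints_subset sub0set.
rewrite eqEsubset subsetT /=; apply/subsetP => j _.
by apply/bigcupP; exists i0 => //; rewrite ffunE eqxx.
Qed.

Lemma allocation_inj X (s : 'I_m -> 'I_m) :
  injective s -> allocation X -> allocation [ffun i => X (s i)].
Proof.
move=> inj_s /andP [/forallP disjX /eqP coverX]; apply/andP; split.
  apply/forallP => a; apply/forallP => b; apply/implyP => neq_ab; rewrite !ffunE.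
  have neq_sab : s a != s b by apply: contra neq_ab => /eqP /inj_s ->.
  by move: (disjX (s a)) => /forallP /(_ (s b)) /implyP; apply.
apply/eqP; rewrite -coverX; under eq_bigr do rewrite ffunE.
by rewrite [RHS](reindex_inj inj_s).
Qed.

End Allocations.

Section SocialCost.
Variables (R : realType) (m n : nat) (c : 'M[R]_(m, n)).
Implicit Types X Y : {ffun 'I_m -> {set 'I_n}}.

Definition social_cost X : R := \sum_i cost c i (X i).

Lemma sum_cost_allocation X i :
  allocation X -> \sum_k cost c i (X k) = cost c i [set: 'I_n].
Proof.
case/andP => /forallP disjX /eqP coverX.
rewrite /cost -coverX partition_disjoint_bigcup // => a b.
by move: (disjX a) => /forallP /(_ b) /implyP.
Qed.

Lemma cost_le_makespan X i : cost c i (X i) <= makespan c X.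
Proof. exact: (le_bigmax 0 (fun k => cost c k (X k))). Qed.

Lemma envy_rotation X (f : 'I_m -> 'I_m) (i0 : 'I_m) :
  allocation X -> (forall i, cost c i (X (f i)) < cost c (f i) (X (f i))) ->
  exists Y, [/\ allocation Y, makespan c Y <= makespan c X
              & social_cost Y < social_cost X].
Proof.
move=> allocX envy_f.
have [S /set0Pn [x Sx] fS] := exists_imset_invariant f i0.
have inj_f : {in S &, injective f} by apply/imset_injP; rewrite fS.
have f_in_S i : i \in S -> f i \in S by move=> Si; rewrite -fS imset_f.
pose s i := if i \in S then f i else i.
have inj_s : injective s.
  move=> a b; rewrite /s; case: ifP => Sa; case: ifP => Sb; first exact: inj_f.
  - by move=> eq_ab; move: (f_in_S _ Sa); rewrite eq_ab Sb.
  - by move=> eq_ab; move: (f_in_S _ Sb); rewrite -eq_ab Sa.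
  - done.
exists [ffun i => X (s i)]; split; first exact: allocation_inj.
  rewrite /makespan; apply: bigmax_le => [|i _]; first exact: bigmax_ge_id.
  rewrite ffunE /s; case: ifP => _; last exact: cost_le_makespan.
  exact: le_trans (ltW (envy_f i)) (cost_le_makespan _ _).
rewrite /social_cost (bigID (mem S)) [X in _ < X](bigID (mem S)) /=.
under [X in X + _ < _]eq_bigr => i Si do rewrite ffunE /s Si.
under [X in _ + X < _]eq_bigr => i Si do rewrite ffunE /s (negbTE Si).
rewrite ltrD2r -{2}fS big_imset //=.
by apply: ltr_sum => [|i _]; [apply/hasP; exists x; rewrite ?mem_index_enum|].
Qed.

Lemma min_social_cost_le_total X (i0 : 'I_m) : allocation X ->
  (forall Y, allocation Y -> makespan c Y <= makespan c X ->
     social_cost X <= social_cost Y) ->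
  exists i, social_cost X <= cost c i [set: 'I_n].
Proof.
move=> allocX minX.
case: (pickP [pred i | [forall k, cost c k (X k) <= cost c i (X k)]]).
  move=> i /forallP dom_i; exists i.
  by rewrite -(sum_cost_allocation i allocX); apply: ler_sum.
move=> envy; have envy_some i : exists k, cost c i (X k) < cost c k (X k).
  by move/negbT/forallPn: (envy i) => [k]; rewrite -ltNge; exists k.
pose f i := xchoose (envy_some i).
have envy_f i : cost c i (X (f i)) < cost c (f i) (X (f i)) := xchooseP (envy_some i).
have [Y [allocY le_makespan lt_social]] := envy_rotation i0 allocX envy_f.
by have := minX Y allocY le_makespan; rewrite leNgt lt_social.
Qed.

Definition opt_min_social X : bool :=
  [&& allocation X,
      [forall Y, allocation Y ==> (makespan c X <= makespan c Y)] &
      [forall Y, allocation Y ==> (makespan c Y <= makespan c X)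
                               ==> (social_cost X <= social_cost Y)]].

Lemma opt_min_socialP X :
  reflect [/\ allocation X,
              forall Y, allocation Y -> makespan c X <= makespan c Y &
              forall Y, allocation Y -> makespan c Y <= makespan c X ->
                social_cost X <= social_cost Y]
          (opt_min_social X).
Proof.
apply: (iffP and3P) => [[allocX /forallP optX /forallP minX]|[allocX optX minX]].
  split=> // Y allocY; first exact: implyP (optX Y) allocY.
  exact/implyP/(implyP (minX Y) allocY).
split=> //; apply/forallP => Y; apply/implyP => allocY; first exact: optX.
exact/implyP/minX.
Qed.

Lemma exists_opt_min_social (i0 : 'I_m) : exists X, opt_min_social X.
Proof.
pose Xo := [arg min_(X < [ffun i => if i == i0 then [set: 'I_n] else set0]
                 | allocation X) makespan c X]%O.
have [allocXo optXo] :
    allocation Xo /\ forall Y, allocation Y -> makespan c Xo <= makespan c Y.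
  rewrite /Xo; case: arg_minP => [|X allocX minX]; first exact: allocation_single.
  by split=> // Y /minX.
pose Xb := [arg min_(X < Xo | allocation X && (makespan c X == makespan c Xo))
              social_cost X]%O.
exists Xb; apply/opt_min_socialP; rewrite /Xb.
case: arg_minP => [|X /andP [allocX /eqP optX] minX]; first by rewrite allocXo eqxx.
split=> // [Y allocY|Y allocY le_makespan]; first by rewrite optX optXo.
by apply: minX; rewrite allocY eq_le -optX le_makespan optX optXo.
Qed.

End SocialCost.

Theorem theorem3 (R : realType) (m n : nat) (hm : (2 <= m)%N) (hn : (2 <= n)%N) :
  exists (A : 'M[R]_(m, n) -> {ffun 'I_m -> {set 'I_n}})
         (p : 'M[R]_(m, n) -> 'I_m -> R),
    (forall c, normalized c -> allocation (A c)) /\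
    proportional (@normalized R m n) A p /\
    (forall c, normalized c -> is_OPT c (makespan c (A c))).
Proof.
have i0 : 'I_m := Ordinal (leq_trans (isT : (0 < 2)%N) hm).
pose A (c : 'M[R]_(m, n)) := odflt [ffun=> set0] [pick X | opt_min_social c X].
have specA c : opt_min_social c (A c).
  rewrite /A; case: pickP => [X //|none].
  by have [X] := exists_opt_min_social c i0; rewrite none.
exists A, (fun c i => cost c i (A c i)); split; [|split]; move=> c normal_c;
  have /opt_min_socialP [allocA optA minA] := specA c.
- exact: allocA.
- case: normal_c => _ [C total_C] i.
  have [k le_total] := min_social_cost_le_total i0 allocA minA.
  rewrite subrr sumrB (sum_cost_allocation c _ allocA) total_C -(total_C k).
  by rewrite mulr_ge0 ?invr_ge0 ?ler0n ?subr_ge0.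
- by split; [exists (A c) | apply: optA].
Qed.
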